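(* Let $\theta\in[0,1]$, and define the stability function and its inverse by $$\mathcal{R}_{\theta}(z)=\frac{1+(1-\theta)z}{1-\theta z},\qquad \mathcal{R}_{\theta}^{-1}(w)=\frac{1-w}{\theta(1-w)-1}.$$ Let $\sigma:\mathbb{R}\to\mathbb{R}$ be a differentiable activation function with $|\sigma|:=\sup_{t}|\sigma'(t)|\in(0,\infty)$. For weight matrices $\gamma_1,\dots,\gamma_n$ (nonzero, of compatible sizes, with $\gamma_1$ having $d$ columns and $\gamma_n$ having $d$ rows) and bias vectors $b_1,\dots,b_n$, set $\tilde{\gamma}_i=\gamma_i/(|\sigma|\,\|\gamma_i\|)$ where $\|\cdot\|$ is the spectral norm, and define the spectrally normalized network $\tilde F(\gamma,x)=\phi_n\circ\cdots\circ\phi_1(x)$ on $\mathbb{R}^d$, where $\phi_i(x)=\sigma(\tilde{\gamma}_i x+b_i)$ with $\sigma$ applied elementwise. Let $S(t)=1/(1+e^{-t})$ be the sigmoid function, let $\gamma_c,\gamma_L\in\mathbb{R}$ be arbitrary scalar parameters, and set $$c:=\mathcal{R}_{\theta}^{-1}\big(1-S(\gamma_c)\big),\qquad r:=\max\Big(0,\ \mathcal{R}_{\theta}^{-1}\big(1-S(\gamma_L)\big)-c\Big),$$ $$F(\gamma,x):=c\,x+r\,\tilde F(\gamma,x).$$ Then the residual layer $y=x+F(\gamma,(1-\theta)x+\theta y)$ is dissipative, i.e., for every $x\in\mathbb{R}^d$, every eigenvalue $\lambda$ of the Jacobian $D_xF(\gamma,x)$ satisfies $|\mathcal{R}_{\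theta}(\lambda)|<1$.
   Context: An implicit residual layer with vector field $F(\gamma,\cdot):\mathbb{R}^d\to\mathbb{R}^d$ and parameter $\theta$ maps $x$ to $y$ defined by $y=x+F(\gamma,(1-\theta)x+\theta y)$. Its stability function is $\mathcal{R}_{\theta}(z)=\frac{1+(1-\theta)z}{1-\theta z}$ for $z\in\mathbb{C}$, and its stability region is the set $\{z\in\mathbb{C}:|\mathcal{R}_{\theta}(z)|<1\}$. The layer is called dissipative if, at every point $x$, all eigenvalues of the Jacobian $D_xF(\gamma,x)$ lie in the stability region. *)

From HB Require Import structures.
From mathcomp Require Import all_boot all_order all_algebra.
From mathcomp Require Import all_classical all_reals all_analysis.
From mathcomp Require Import complex.
Set Implicit Arguments. Unset Strict Implicit. Unset Printing Implicit Defensive.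
Import Order.TTheory GRing.Theory Num.Theory.
Import numFieldNormedType.Exports.
Local Open Scope classical_set_scope.
Local Open Scope ring_scope.

Section Defs.
Variable R : realType.

Definition stabR (theta : R) (z : R[i]) : R[i] :=
  (1 + ((1 - theta)%:C)%C * z) / (1 - (theta%:C)%C * z).

(* stability region {z | |R_theta(z)| < 1}; we require the denominator to be
   nonzero so that R_theta(z) is actually defined (at the pole z = 1/theta,
   |R_theta| = +oo, so z is not in the region). *)
Definition stab_region (theta : R) : set R[i] :=
  [set z | 1 - (theta%:C)%C * z != 0 /\ `|stabR theta z| < 1].

Definition stabRinv (theta w : R) : R := (1 - w) / (theta * (1 - w) - 1).

Definition sigmoid (t : R) : R := 1 / (1 + expR (- t)).

Definition act_norm (sigma : R -> R) : R :=
  sup (range (fun t => `|derive1 sigma t|)).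

Definition euclid_norm m (v : 'cV[R]_m) : R := Num.sqrt (\sum_i v i 0 ^+ 2).

Definition spec_norm m k (A : 'M[R]_(m, k)) : R :=
  sup [set euclid_norm (A *m v) | v in [set v : 'cV[R]_k | euclid_norm v <= 1]].

Definition jacobianC m (f : 'cV[R]_m -> 'cV[R]_m) (x : 'cV[R]_m) : 'M[R]_m :=
  \matrix_(i, j) ('d f x (delta_mx j 0)) i 0.

(* spectrally normalized network.  Layer i (0-based; paper's layer i+1) maps
   R^(dims i) to R^(dims i.+1). *)
Variables (sigma : R -> R) (dims : nat -> nat)
  (gam : forall i, 'M[R]_(dims i.+1, dims i)) (b : forall i, 'cV[R]_(dims i.+1)).

Definition gam_tilde i : 'M[R]_(dims i.+1, dims i) :=
  (act_norm sigma * spec_norm (gam i))^-1 *: gam i.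

Definition layer i (x : 'cV[R]_(dims i)) : 'cV[R]_(dims i.+1) :=
  map_mx sigma (gam_tilde i *m x + b i).

Fixpoint net (k : nat) : 'cV[R]_(dims 0%N) -> 'cV[R]_(dims k) :=
  match k return 'cV[R]_(dims 0%N) -> 'cV[R]_(dims k) with
  | 0 => fun x => x
  | k'.+1 => fun x => layer (net k' x)
  end.

Definition net_tilde n (hn : dims n = dims 0%N) (x : 'cV[R]_(dims 0%N)) : 'cV[R]_(dims 0%N) :=
  castmx (hn, erefl 1%N) (net n x).

Definition layer_field (theta gc gL : R) n (hn : dims n = dims 0%N)
    (x : 'cV[R]_(dims 0%N)) : 'cV[R]_(dims 0%N) :=
  let c := stabRinv theta (1 - sigmoid gc) in
  let r := Num.max 0 (stabRinv theta (1 - sigmoid gL) - c) in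
  c *: x + r *: net_tilde hn x.

End Defs.

From HB Require Import structures.
From mathcomp Require Import all_boot all_order all_algebra.
From mathcomp Require Import all_classical all_reals all_analysis.
From mathcomp Require Import complex.
From mathcomp Require Import ring lra.
Set Implicit Arguments. Unset Strict Implicit. Unset Printing Implicit Defensive.
Import Order.TTheory GRing.Theory Num.Theory.
Import numFieldNormedType.Exports.
Local Open Scope classical_set_scope.
Local Open Scope ring_scope.

(* The Jacobian of F is c I + r K, with K the Jacobian of the normalised
   network.  Each layer has differential v |-> sigma'(.) .* (gamma~ v), whose
   norm is at most |sigma| ||gamma~|| = 1, so ||K v|| <= ||v||.  Splitting a
   complex eigenvector of c I + r K into real and imaginary parts shows that
   every eigenvalue lies in the closed disc of centre c and radius r.  For
   z = a + ib, |R_theta(z)| < 1 iff 2a + (1 - 2 theta) |z|^2 < 0, and the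
   disc satisfies this because c < 0, c + r = max(c, c_L) < 0 and both c and
   c + r lie to the right of the zero -1/(1 - theta) of R_theta. *)

Section matrix_differential.
Variable R : realFieldType.

Lemma diff_sum (V W : normedModType R) n (f : 'I_n -> V -> W) x :
  (forall i, differentiable (f i) x) ->
  'd (\sum_(i < n) f i) x = \sum_(i < n) ('d (f i) x : V -> W) :> (V -> W).
Proof.
move=> df; suff [] : differentiable (\sum_(i < n) f i) x /\
    'd (\sum_(i < n) f i) x = \sum_(i < n) ('d (f i) x : V -> W) :> (V -> W) by [].
elim/big_rec2: _ => [|i dg g _ [g_x dgE]].
  by split; [exact: (differentiable_cst 0) | rewrite (diff_cst 0)].
split; first exact: differentiableD.
by rewrite -dgE (diffD (df i) g_x).
Qed.

Lemma diff_scale_add (V : normedModType R) (g : V -> V) (c r : R) x v :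
  differentiable g x -> 'd (fun y => c *: y + r *: g y) x v = c *: v + r *: 'd g x v.
Proof.
move=> dg; have D := is_diffD (is_diff_scaler c x) (is_diffZ r (differentiableP dg)).
have -> : (fun y => c *: y + r *: g y) = *:%R c + r *: g by [].
by rewrite diff_val.
Qed.

Lemma diff_coord m n i j (M : 'M[R]_(m, n)) :
  'd (fun N : 'M[R]_(m, n) => N i j) M = (fun N => N i j) :> (_ -> R).
Proof.
have @f : {linear 'M[R]_(m, n) -> R}.
  by exists (fun N : 'M[R]_(_, _) => N i j); do 2![eexists]; do ?[constructor];
     rewrite ?mxE// => ? *; rewrite ?mxE//; move=> ?; rewrite !mxE.
by rewrite (_ : (fun _ => _) = f) // diff_lin //; exact: coord_continuous.
Qed.

Lemma differentiable_mx (V : normedModType R) m n (f : V -> 'M[R]_(m, n)) x :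
  (forall i j, differentiable (fun y => f y i j) x) -> differentiable f x.
Proof.
move=> df; have -> : f = \sum_(i < m) \sum_(j < n) (fun y => f y i j *: delta_mx i j).
  apply/funext => y; rewrite [LHS]matrix_sum_delta fct_sumE.
  by apply: eq_bigr => i _; rewrite fct_sumE.
apply: differentiable_sum => i; apply: differentiable_sum => j.
exact: differentiableZl.
Qed.

Lemma diff_mxE (V : normedModType R) m n (f : V -> 'M[R]_(m, n)) x v i j :
  differentiable f x -> 'd f x v i j = 'd (fun y => f y i j) x v.
Proof.
move=> df; rewrite (_ : (fun y => f y i j) = (fun N : 'M[R]_(m, n) => N i j) \o f) //.
rewrite (diff_comp df) //=; last exact: differentiable_coord.
by rewrite (diff_coord i j (f x)).
Qed.

Lemma affine_entryE p q s (G : 'M[R]_(q, p)) (c : 'M[R]_(q, s)) i j :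
  (fun N => (G *m N + c) i j) =
    \sum_(l < p) G i l *: (fun N : 'M[R]_(p, s) => N l j) + cst (c i j).
Proof. by apply/funext => N; rewrite /= !mxE fct_sumE. Qed.

Lemma differentiable_affine_entry p q s (G : 'M[R]_(q, p)) (c : 'M[R]_(q, s)) i j
    (M : 'M[R]_(p, s)) :
  differentiable (fun N => (G *m N + c) i j) M.
Proof.
rewrite affine_entryE; apply: differentiableD; last exact: differentiable_cst.
by apply: differentiable_sum => l; apply: differentiableZ; exact: differentiable_coord.
Qed.

Lemma diff_affine_entry p q s (G : 'M[R]_(q, p)) (c : 'M[R]_(q, s)) i j
    (M : 'M[R]_(p, s)) :
  'd (fun N => (G *m N + c) i j) M = (fun N => (G *m N) i j) :> (_ -> R).
Proof.
have dcoord l : differentiable (G i l *: (fun N : 'M[R]_(p, s) => N l j)) M.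
  by apply: differentiableZ; exact: differentiable_coord.
rewrite affine_entryE diffD; [|exact: differentiable_sum|exact: differentiable_cst].
rewrite diff_sum // diff_cst; apply/funext => N /=.
rewrite mxE addr0 fct_sumE; apply: eq_bigr => l _.
rewrite diffZ; last exact: differentiable_coord.
by rewrite /= diff_coord.
Qed.

Lemma differentiable_map_affine p q s (f : R -> R) (G : 'M[R]_(q, p)) (c : 'M[R]_(q, s))
    (M : 'M[R]_(p, s)) :
  (forall t, derivable f t 1) -> differentiable (fun N => map_mx f (G *m N + c)) M.
Proof.
move=> df; apply: differentiable_mx => i j.
have -> : (fun N => map_mx f (G *m N + c) i j) = f \o (fun N => (G *m N + c) i j).
  by apply/funext => N; rewrite mxE.
apply: differentiable_comp; [exact: differentiable_affine_entry | exact/derivable1_diffP].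
Qed.

Lemma diff_map_affine p q s (f : R -> R) (G : 'M[R]_(q, p)) (c : 'M[R]_(q, s))
    (M N : 'M[R]_(p, s)) :
  (forall t, derivable f t 1) ->
  'd (fun N => map_mx f (G *m N + c)) M N =
    \matrix_(i, j) ((G *m N) i j * derive1 f ((G *m M + c) i j)).
Proof.
move=> df; apply/matrixP => i j; rewrite mxE diff_mxE; last exact: differentiable_map_affine.
have -> : (fun N => map_mx f (G *m N + c) i j) = f \o (fun N => (G *m N + c) i j).
  by apply/funext => N'; rewrite mxE.
rewrite diff_comp; [|exact: differentiable_affine_entry|exact/derivable1_diffP].
by rewrite /= diff_affine_entry deriv1E.
Qed.

End matrix_differential.

Section euclidean_norm.
Variable R : realType.

Lemma euclid_norm_ge0 m (v : 'cV[R]_m) : 0 <= euclid_norm v.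
Proof. exact: sqrtr_ge0. Qed.

Lemma sqr_euclid_norm m (v : 'cV[R]_m) : euclid_norm v ^+ 2 = \sum_i v i 0 ^+ 2.
Proof. by rewrite sqr_sqrtr // sumr_ge0 // => i _; exact: sqr_ge0. Qed.

Lemma euclid_normZ m a (v : 'cV[R]_m) : euclid_norm (a *: v) = `|a| * euclid_norm v.
Proof.
rewrite /euclid_norm -sqrtr_sqr -sqrtrM ?sqr_ge0 // mulr_sumr.
by congr Num.sqrt; apply: eq_bigr => i _; rewrite mxE exprMn.
Qed.

Lemma euclid_norm_eq0 m (v : 'cV[R]_m) : (euclid_norm v == 0) = (v == 0).
Proof.
apply/eqP/eqP => [v0|->]; last first.
  by rewrite /euclid_norm big1 ?sqrtr0 // => i _; rewrite mxE expr0n.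
have /psumr_eq0P sq0 : \sum_i v i 0 ^+ 2 = 0 by rewrite -sqr_euclid_norm v0 expr0n.
apply/matrixP => i j; rewrite (ord1 j) mxE; apply/eqP.
by rewrite -sqrf_eq0 sq0 // => k _; exact: sqr_ge0.
Qed.

Lemma euclid_norm0 m : euclid_norm (0 : 'cV[R]_m) = 0.
Proof. by apply/eqP; rewrite euclid_norm_eq0. Qed.

Lemma euclid_norm_le m (u w : 'cV[R]_m) :
  (forall i, `|u i 0| <= `|w i 0|) -> euclid_norm u <= euclid_norm w.
Proof.
move=> uw; rewrite ler_sqrt ?sumr_ge0 // => [|i _]; last exact: sqr_ge0.
apply: ler_sum => i _.
by rewrite -[u i 0 ^+ 2]real_normK ?num_real // -[w i 0 ^+ 2]real_normK ?num_real // ler_sqr.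
Qed.

Lemma ler_abs_euclid_norm m (v : 'cV[R]_m) i : `|v i 0| <= euclid_norm v.
Proof.
rewrite -sqrtr_sqr ler_sqrt ?sumr_ge0 // => [|k _]; last exact: sqr_ge0.
by rewrite (bigD1 i) //= lerDl sumr_ge0 // => k _; exact: sqr_ge0.
Qed.

Lemma spec_norm_has_ubound m k (A : 'M[R]_(m, k)) :
  has_ubound [set euclid_norm (A *m v) | v in [set v : 'cV[R]_k | euclid_norm v <= 1]].
Proof.
exists (euclid_norm (\col_i \sum_l `|A i l|)) => _ [v /= v1 <-].
apply: euclid_norm_le => i; rewrite !mxE [leRHS]ger0_norm ?sumr_ge0 //.
apply: le_trans (ler_norm_sum _ _ _) _; apply: ler_sum => l _.
rewrite normrM ler_piMr //; exact: le_trans (ler_abs_euclid_norm v l) v1.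
Qed.

Lemma euclid_norm_mulmx_le m k (A : 'M[R]_(m, k)) (v : 'cV[R]_k) :
  euclid_norm (A *m v) <= spec_norm A * euclid_norm v.
Proof.
have [->|v_neq0] := eqVneq v 0; first by rewrite mulmx0 !euclid_norm0 mulr0.
have v_gt0 : 0 < euclid_norm v by rewrite lt0r euclid_norm_eq0 v_neq0 euclid_norm_ge0.
rewrite -ler_pdivrMr // mulrC -[X in X * _]ger0_norm ?invr_ge0 ?euclid_norm_ge0 //.
rewrite -euclid_normZ scalemxAr; apply: ub_le_sup; first exact: spec_norm_has_ubound.
exists ((euclid_norm v)^-1 *: v) => //=.
by rewrite euclid_normZ ger0_norm ?invr_ge0 ?euclid_norm_ge0 // mulVf // gt_eqF.
Qed.

Lemma spec_norm_gt0 m k (A : 'M[R]_(m, k)) : A != 0 -> 0 < spec_norm A.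
Proof.
case/matrix0Pn => i [l Ail].
pose e : 'cV[R]_k := delta_mx l 0.
have e1 : euclid_norm e = 1.
  rewrite /euclid_norm (bigD1 l) //= big1 => [|j /negbTE jl]; last by rewrite mxE jl expr0n.
  by rewrite mxE !eqxx expr1n addr0 sqrtr1.
have Ae_gt0 : 0 < euclid_norm (A *m e).
  by apply: lt_le_trans (ler_abs_euclid_norm _ i); rewrite -colE mxE normr_gt0.
apply: lt_le_trans Ae_gt0 _.
by apply: ub_le_sup; [exact: spec_norm_has_ubound | exists e; rewrite //= e1].
Qed.

End euclidean_norm.

Section nonexpansive_networks.
Variable R : realType.

Definition nonexpansive_at m k (f : 'cV[R]_m -> 'cV[R]_k) x :=
  differentiable f x /\ forall v, euclid_norm ('d f x v) <= euclid_norm v.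

Lemma nonexpansive_at_id m (x : 'cV[R]_m) : nonexpansive_at id x.
Proof. by split=> [|v]; rewrite ?diff_val. Qed.

Lemma nonexpansive_at_comp m k l (f : 'cV[R]_m -> 'cV[R]_k) (g : 'cV[R]_k -> 'cV[R]_l) x :
  nonexpansive_at f x -> nonexpansive_at g (f x) -> nonexpansive_at (g \o f) x.
Proof.
move=> [df f1] [dg g1]; split=> [|v]; first exact: differentiable_comp.
by rewrite diff_comp //=; apply: le_trans (g1 _) (f1 v).
Qed.

Lemma nonexpansive_at_castmx m k k' (e : k = k') (f : 'cV[R]_m -> 'cV[R]_k) x :
  nonexpansive_at f x -> nonexpansive_at (fun y => castmx (e, erefl 1%N) (f y)) x.
Proof.
by case: k' / e; rewrite (_ : (fun y => castmx _ (f y)) = f) //;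
  apply/funext => y; rewrite castmx_id.
Qed.

Lemma nonexpansive_at_map_affine p q (sigma : R -> R) a (G : 'M[R]_(q, p)) (c : 'cV[R]_q) x :
  (forall t, derivable sigma t 1) -> (forall t, `|derive1 sigma t| <= a) ->
  (forall v, a * euclid_norm (G *m v) <= euclid_norm v) ->
  nonexpansive_at (fun y => map_mx sigma (G *m y + c)) x.
Proof.
move=> ds sigma'_le G_le; split=> [|v]; first exact: differentiable_map_affine.
have a_ge0 : 0 <= a by apply: le_trans (sigma'_le 0).
rewrite diff_map_affine //; apply: le_trans (G_le v).
rewrite -[X in X * _]ger0_norm // -euclid_normZ.
apply: euclid_norm_le => i; rewrite !mxE normrM [leRHS]normrM mulrC.
by rewrite ler_wpM2r // (ger0_norm a_ge0).
Qed.

Lemma le_act_norm (sigma : R -> R) t :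
  has_ubound (range (fun t => `|derive1 sigma t|)) -> `|derive1 sigma t| <= act_norm sigma.
Proof. by move=> ub; apply: ub_le_sup => //; exists t. Qed.

Variables (sigma : R -> R) (dims : nat -> nat)
  (gam : forall i, 'M[R]_(dims i.+1, dims i)) (b : forall i, 'cV[R]_(dims i.+1)).
Hypotheses (sigma_derivable : forall t, derivable sigma t 1)
  (sigma'_ub : has_ubound (range (fun t => `|derive1 sigma t|)))
  (act_norm_gt0 : 0 < act_norm sigma).

Lemma gam_tilde_le i (v : 'cV[R]_(dims i)) : gam i != 0 ->
  act_norm sigma * euclid_norm (gam_tilde sigma gam i *m v) <= euclid_norm v.
Proof.
move=> gam_neq0; have s_gt0 := spec_norm_gt0 gam_neq0.
rewrite /gam_tilde -scalemxAl euclid_normZ ger0_norm; last first.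
  by rewrite invr_ge0 mulr_ge0 // ltW.
rewrite invfM !mulrA mulfV ?gt_eqF // mul1r mulrC ler_pdivrMr // mulrC.
exact: euclid_norm_mulmx_le.
Qed.

Lemma layer_nonexpansive i x : gam i != 0 -> nonexpansive_at (@layer R sigma dims gam b i) x.
Proof.
move=> gam_neq0; apply: nonexpansive_at_map_affine => // [t|v].
  exact: le_act_norm.
exact: gam_tilde_le.
Qed.

Lemma net_nonexpansive n k x : (forall i, (i < n)%N -> gam i != 0) -> (k <= n)%N ->
  nonexpansive_at (net sigma gam b k) x.
Proof.
move=> gam_neq0; elim: k => [|k IHk] lt_kn; first exact: nonexpansive_at_id.
apply: (nonexpansive_at_comp (IHk (ltnW lt_kn))).
exact: layer_nonexpansive (gam_neq0 k lt_kn).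
Qed.

Lemma net_tilde_nonexpansive n (hn : dims n = dims 0%N) x :
  (forall i, (i < n)%N -> gam i != 0) -> nonexpansive_at (net_tilde sigma gam b hn) x.
Proof.
move=> /(net_nonexpansive x) /(_ (leqnn n)); exact: nonexpansive_at_castmx.
Qed.

End nonexpansive_networks.

Section jacobian.
Variable R : realType.

Lemma jacobianC_scale_add m (g : 'cV[R]_m -> 'cV[R]_m) (c r : R) x :
  differentiable g x ->
  jacobianC (fun y => c *: y + r *: g y) x = c%:M + r *: jacobianC g x.
Proof.
move=> dg; apply/matrixP => i j.
by rewrite mxE (diff_scale_add _ _ _ dg) !mxE eqxx andbT mulr_natr.
Qed.

Lemma mul_jacobianC m (f : 'cV[R]_m -> 'cV[R]_m) x (v : 'cV[R]_m) :
  jacobianC f x *m v = 'd f x v.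
Proof.
rewrite [in RHS](matrix_sum_delta v) linear_sum; apply/matrixP => i j.
rewrite (ord1 j) !mxE summxE; apply: eq_bigr => l _.
by rewrite big_ord1 linearZ /= !mxE mulrC.
Qed.

End jacobian.

Lemma eigenvalue_col (F : fieldType) n (A : 'M[F]_n) a :
  eigenvalue A a -> exists2 w : 'cV[F]_n, w != 0 & A *m w = a *: w.
Proof.
(* [eigenvalue] is about row eigenvectors; [a%:M - A] and its transpose are
   singular together. *)
case/eigenvalueP => v vA v_neq0.
have : \det (a%:M - A) == 0.
  by apply/det0P; exists v => //; rewrite mulmxBr vA mul_mx_scalar subrr.
rewrite -det_tr => /det0P [u u_neq0 uA].
exists u^T; first by rewrite trmx_eq0.
move/(congr1 trmx): uA; rewrite trmx_mul trmxK trmx0 mulmxBl mul_scalar_mx.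
by move/eqP; rewrite subr_eq0 => /eqP.
Qed.

Section real_matrices_over_complex.
Variable R : realType.
Local Notation toC := (fun a : R => (a%:C)%C).
Local Notation Re := (@complex.Re R).
Local Notation Im := (@complex.Im R).

Lemma Re_mulmx_real m n (M : 'M[R]_(m, n)) (w : 'cV[R[i]]_n) :
  map_mx Re (map_mx toC M *m w) = M *m map_mx Re w.
Proof.
apply/matrixP => i j; rewrite !mxE (raddf_sum Re); apply: eq_bigr => l _.
by rewrite !mxE; case: (w l j) => u v /=; rewrite mul0r subr0.
Qed.

Lemma Im_mulmx_real m n (M : 'M[R]_(m, n)) (w : 'cV[R[i]]_n) :
  map_mx Im (map_mx toC M *m w) = M *m map_mx Im w.
Proof.
apply/matrixP => i j; rewrite !mxE (raddf_sum Im); apply: eq_bigr => l _.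
by rewrite !mxE; case: (w l j) => u v /=; rewrite mul0r addr0.
Qed.

Lemma eigenvalue_real_pair n (M : 'M[R]_n) lam :
  eigenvalue (map_mx toC M) lam ->
  exists p q : 'cV[R]_n, [/\ (p != 0) || (q != 0),
    M *m p = Re lam *: p - Im lam *: q & M *m q = Re lam *: q + Im lam *: p].
Proof.
case/eigenvalue_col => w w_neq0 Mw.
exists (map_mx Re w), (map_mx Im w); split; last 2 first.
- rewrite -Re_mulmx_real {}Mw; apply/matrixP => i j; rewrite !mxE.
  by case: (w i j) => u v /=; case: lam => a b /=.
- rewrite -Im_mulmx_real {}Mw; apply/matrixP => i j; rewrite !mxE.
  by case: (w i j) => u v /=; case: lam => a b /=.
- apply: contraNT w_neq0; rewrite negb_or !negbK => /andP[/eqP/matrixP Re0 /eqP/matrixP Im0].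
  apply/eqP/matrixP => i j; move: (Re0 i j) (Im0 i j); rewrite !mxE.
  by case: (w i j) => u v /= -> ->.
Qed.

Lemma sqr_euclid_norm_rot n (s t : R) (p q : 'cV[R]_n) :
  euclid_norm (s *: p - t *: q) ^+ 2 + euclid_norm (s *: q + t *: p) ^+ 2 =
  (s ^+ 2 + t ^+ 2) * (euclid_norm p ^+ 2 + euclid_norm q ^+ 2).
Proof.
rewrite !sqr_euclid_norm mulrDr !mulr_sumr -!big_split; apply: eq_bigr => i _ /=.
by rewrite !mxE; ring.
Qed.

Lemma eigenvalue_disk n (K : 'M[R]_n) (c r : R) lam :
  (forall v, euclid_norm (K *m v) <= euclid_norm v) ->
  eigenvalue (map_mx toC (c%:M + r *: K)) lam ->
  (Re lam - c) ^+ 2 + Im lam ^+ 2 <= r ^+ 2.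
Proof.
move=> K_le /eigenvalue_real_pair [p [q [pq_neq0 Mp Mq]]].
have shift u : (c%:M + r *: K) *m u = c *: u + r *: (K *m u).
  by rewrite mulmxDl mul_scalar_mx scalemxAl.
have rKp : r *: (K *m p) = (Re lam - c) *: p - Im lam *: q.
  by rewrite scalerBl addrAC -Mp shift addrC addKr.
have rKq : r *: (K *m q) = (Re lam - c) *: q + Im lam *: p.
  by rewrite scalerBl addrAC -Mq shift addrC addKr.
have N_gt0 : 0 < euclid_norm p ^+ 2 + euclid_norm q ^+ 2.
  have sq_gt0 (u : 'cV[R]_n) : u != 0 -> 0 < euclid_norm u ^+ 2.
    by move=> u_neq0; rewrite exprn_gt0 // lt0r euclid_norm_eq0 u_neq0 euclid_norm_ge0.
  case/orP: pq_neq0 => [/sq_gt0 p_gt0|/sq_gt0 q_gt0].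
    exact: ltr_pwDl p_gt0 (sqr_ge0 _).
  exact: ltr_wpDl (sqr_ge0 _) q_gt0.
rewrite -(ler_pM2r N_gt0) -sqr_euclid_norm_rot -rKp -rKq !euclid_normZ !exprMn.
rewrite real_normK ?num_real // -mulrDr ler_wpM2l ?sqr_ge0 //.
by apply: lerD; rewrite ler_sqr ?nnegrE ?euclid_norm_ge0.
Qed.

End real_matrices_over_complex.

Section stability_region.
Variable R : realType.

Lemma quadratic_lt0_in_stab_region (theta : R) (z : R[i]) :
  2 * complex.Re z + (1 - 2 * theta) * (complex.Re z ^+ 2 + complex.Im z ^+ 2) < 0 ->
  z \in stab_region theta.
Proof.
case: z => a b /= neg.
have normE (u v : R) : `|(u +i* v)%C| = (Num.sqrt (u ^+ 2 + v ^+ 2))%:C%C by [].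
have numE : 1 + ((1 - theta)%:C)%C * (a +i* b)%C =
    ((1 + (1 - theta) * a) +i* ((1 - theta) * b))%C.
  by apply/eqP; rewrite eq_complex /=; apply/andP; split; apply/eqP; ring.
have denE : 1 - (theta%:C)%C * (a +i* b)%C = ((1 - theta * a) +i* (- (theta * b)))%C.
  by apply/eqP; rewrite eq_complex /=; apply/andP; split; apply/eqP; ring.
(* The difference of the two sides is -(2 a + (1 - 2 theta) (a^2 + b^2)). *)
have num_lt_den : (1 + (1 - theta) * a) ^+ 2 + ((1 - theta) * b) ^+ 2 <
    (1 - theta * a) ^+ 2 + (- (theta * b)) ^+ 2 by nra.
have den_gt0 : 0 < (1 - theta * a) ^+ 2 + (- (theta * b)) ^+ 2.
  by apply: le_lt_trans num_lt_den; rewrite addr_ge0 ?sqr_ge0.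
rewrite inE /stab_region /stabR /= numE denE; split.
  by rewrite -normr_gt0 normE ltcR sqrtr_gt0.
by rewrite normf_div ltr_pdivrMr ?normE ?ltcR ?sqrtr_gt0 // mul1r ltcR ltr_sqrt.
Qed.

Lemma disk_quadratic_lt0 (theta c r a b : R) :
  0 <= theta <= 1 -> 0 <= r -> c + r < 0 ->
  0 < 1 + (1 - theta) * c -> 0 < 1 + (1 - theta) * (c + r) ->
  (a - c) ^+ 2 + b ^+ 2 <= r ^+ 2 ->
  2 * a + (1 - 2 * theta) * (a ^+ 2 + b ^+ 2) < 0.
Proof.
move=> /andP[theta_ge0 theta_le1] r_ge0 cr_lt0 num_c_gt0 num_cr_gt0 disk.
have a_le : a <= c + r.
  have : (a - c) ^+ 2 <= r ^+ 2 by apply: le_trans disk; rewrite lerDl sqr_ge0.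
  by move=> h; nra.
have [k_le0|k_gt0] := lerP (1 - 2 * theta) 0.
  have ab_ge0 : 0 <= a ^+ 2 + b ^+ 2 by rewrite addr_ge0 ?sqr_ge0.
  nra.
(* For theta < 1/2 the region is the disc of centre -1/(1 - 2 theta) through
   0; since c lies right of that centre, the disc of centre c and radius r is
   inside it as soon as c + r < 0. *)
have kc_gt0 : 0 < 1 + (1 - 2 * theta) * c by nra.
have kcr_gt0 : 0 < 2 + (1 - 2 * theta) * (c + r) by nra.
have : 2 * a + (1 - 2 * theta) * (a ^+ 2 + b ^+ 2) <=
    (c + r) * (2 + (1 - 2 * theta) * (c + r)) by nra.
nra.
Qed.

Lemma one_sub_sigmoid_itv (g : R) : 0 < 1 - sigmoid g < 1.
Proof.
have e_gt0 := expR_gt0 (- g).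
have -> : 1 - sigmoid g = expR (- g) / (1 + expR (- g)).
  by rewrite /sigmoid; field; rewrite gt_eqF // ltr_wpDr // ltW.
by rewrite divr_gt0 ?addr_gt0 //= ltr_pdivrMr ?addr_gt0 // mul1r ltrDr.
Qed.

Lemma stabRinv_bounds (theta w : R) : 0 <= theta <= 1 -> 0 < w < 1 ->
  stabRinv theta w < 0 /\ 0 < 1 + (1 - theta) * stabRinv theta w.
Proof.
move=> /andP[theta_ge0 theta_le1] /andP[w_gt0 w_lt1].
have d_lt0 : theta * (1 - w) - 1 < 0 by nra.
rewrite /stabRinv; set c := _ / _.
have cd : c * (theta * (1 - w) - 1) = 1 - w by rewrite /c divfK // lt_eqF.
have num_c : (1 + (1 - theta) * c) * (theta * (1 - w) - 1) = - w.
  by rewrite mulrDl mul1r -mulrA cd; ring.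
by split; nra.
Qed.

Lemma addr_max0 (c d : R) : c + Num.max 0 (d - c) = Num.max c d.
Proof. by rewrite addr_maxr addr0 addrC subrK. Qed.

Lemma max_disk_quadratic_lt0 (theta c d a b : R) :
  0 <= theta <= 1 -> c < 0 -> d < 0 ->
  0 < 1 + (1 - theta) * c -> 0 < 1 + (1 - theta) * d ->
  (a - c) ^+ 2 + b ^+ 2 <= Num.max 0 (d - c) ^+ 2 ->
  2 * a + (1 - 2 * theta) * (a ^+ 2 + b ^+ 2) < 0.
Proof.
move=> theta01 c_lt0 d_lt0 num_c_gt0 num_d_gt0.
apply: disk_quadratic_lt0 => //; first by rewrite le_max lexx.
  by rewrite addr_max0 gt_max c_lt0.
by rewrite addr_max0 /Order.max; case: ifP.
Qed.

End stability_region.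

Theorem theorem1 (R : realType) (theta : R) (sigma : R -> R)
  (n : nat) (dims : nat -> nat)
  (gam : forall i, 'M[R]_(dims i.+1, dims i)) (b : forall i, 'cV[R]_(dims i.+1))
  (hn : dims n = dims 0%N) (gc gL : R) :
  0 <= theta <= 1 ->
  (forall t : R, derivable sigma t 1) ->
  has_ubound (range (fun t => `|derive1 sigma t|)) ->
  0 < act_norm sigma ->
  (0 < n)%N ->
  (forall i, (i < n)%N -> gam i != 0) ->
  forall (x : 'cV[R]_(dims 0%N)) (lam : R[i]),
    eigenvalue (map_mx (fun a : R => (a%:C)%C)
                  (jacobianC (layer_field sigma gam b theta gc gL hn) x)) lam ->
    lam \in stab_region theta.
Proof.
move=> theta01 ds ub act_gt0 _ gam_neq0 x lam.
have [dK K_le] := net_tilde_nonexpansive b ds ub act_gt0 hn x gam_neq0.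
set c := stabRinv theta (1 - sigmoid gc); set cL := stabRinv theta (1 - sigmoid gL).
have [c_lt0 num_c_gt0] := stabRinv_bounds theta01 (one_sub_sigmoid_itv gc).
have [cL_lt0 num_cL_gt0] := stabRinv_bounds theta01 (one_sub_sigmoid_itv gL).
have -> : layer_field sigma gam b theta gc gL hn =
    fun y => c *: y + Num.max 0 (cL - c) *: net_tilde sigma gam b hn y by [].
have K'_le v : euclid_norm (jacobianC (net_tilde sigma gam b hn) x *m v) <= euclid_norm v.
  by rewrite mul_jacobianC.
rewrite jacobianC_scale_add // => /(eigenvalue_disk K'_le) disk.
apply: quadratic_lt0_in_stab_region.
exact: (max_disk_quadratic_lt0 theta01 c_lt0 cL_lt0 num_c_gt0 num_cL_gt0 disk).
Qed.
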